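(* Let $k\geq 2$ be an integer and let $F_k(x,t)=\sum_{n\geq 0}\sum_{w\in[k]^n} t^{\mathrm{s}(w)}x^n$. Put $\phi=\dfrac{1-x(t-1)}{2x(t-1)}$ and \[\gamma(x,t)=\frac{k}{1-3x(t-1)}-\frac{2x(t-1)}{(1-3x(t-1))^{2}}\cdot\frac{U_{k}(\phi)-U_{k-1}(\phi)-1}{U_{k}(\phi)}.\] Then \[F_k(x,t)=\frac{1}{1-x\gamma(x,t)}.\]
   Context: For an integer $k\geq 2$, $[k]=\{1,2,\ldots,k\}$ and a word over $k$ of length $n$ is an element $w=w_1\cdots w_n\in[k]^n$ ($[k]^0$ consists of the empty word). For such $w$, $\mathrm{s}(w)$ is the number of indices $1\leq i\leq n-1$ with $|w_{i+1}-w_i|\leq 1$ (so $\mathrm{s}(w)=0$ if $n\leq 1$). $U_n$ denotes the Chebyshev polynomial of the second kind: $U_0(x)=1$, $U_1(x)=2x$, $U_{n+1}(x)=2xU_n(x)-U_{n-1}(x)$. The identity is an identity of rational functions in $x,t$ (equivalently of formal power series in $x$ with coefficients polynomial in $t$). *)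

From HB Require Import structures.
From mathcomp Require Import all_boot all_order all_algebra.
From mathcomp Require Import all_classical all_reals all_analysis.
Set Implicit Arguments. Unset Strict Implicit. Unset Printing Implicit Defensive.
Import Order.TTheory GRing.Theory Num.Theory.
Local Open Scope ring_scope.

(* Words of length n over the alphabet [k] are encoded as finite functions
   'I_n -> 'I_k (letters 0..k-1 instead of 1..k; only differences of
   consecutive letters matter, so s(w) is unchanged by this shift). *)

Definition letter (k n : nat) (w : {ffun 'I_n -> 'I_k}) (i : nat) : nat :=
  nth 0%N [seq nat_of_ord (w j) | j <- enum 'I_n] i.

(* s(w) = #{ 1 <= i <= n-1 : |w_{i+1} - w_i| <= 1 } ; here 0-based: i < n-1 *)
Definition sstat (k n : nat) (w : {ffun 'I_n -> 'I_k}) : nat :=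
  \sum_(i < n.-1) ((`|(letter w i.+1)%:Z - (letter w i)%:Z|%N <= 1)%N : nat).

Definition Fcoef (R : ringType) (k n : nat) (t : R) : R :=
  \sum_(w : {ffun 'I_n -> 'I_k}) t ^+ sstat w.

Fixpoint chebU (R : ringType) (n : nat) (x : R) : R :=
  match n with
  | 0 => 1
  | S m => match m with
           | 0 => 2 * x
           | S p => 2 * x * chebU m x - chebU p x
           end
  end.

(* Recording the last letter, the weights t^s(w) of the words of
   length n+1 are the entries of A^n 1 for the k x k transfer matrix
   A(i,j) = t^[|i-j| <= 1] = J + (t-1) T, where J = 1 1^T and T is the
   tridiagonal 0/1 matrix; hence F_k = 1 + x 1^T (I - x A)^-1 1 for small x.
   With y = x(t-1), the vector h = (I - y T)^-1 1 is the solution of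
   h_(m+1) = 1 + y (h_m + h_(m+1) + h_(m+2)) with h_0 = h_(k+1) = 0; it is
   explicit in terms of U_n(phi) because 2 phi y = 1 - y, and summing the
   recurrence gives 1^T h = gamma.  Since J has rank one,
   (I - x A)^-1 1 = h / (1 - x gamma), so F_k = 1 / (1 - x gamma).  The partial
   sums converge geometrically: their error vector is multiplied by x A at each
   step. *)

From HB Require Import structures.
From mathcomp Require Import all_boot all_order all_algebra.
From mathcomp Require Import all_classical all_reals all_analysis.
From mathcomp Require Import ring lra zify.
Import Order.TTheory GRing.Theory Num.Theory numFieldNormedType.Exports.
Set Implicit Arguments. Unset Strict Implicit. Unset Printing Implicit Defensive.
Local Open Scope ring_scope.

Definition smallstep (a b : nat) : bool := (`|a%:Z - b%:Z|%N <= 1)%N.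

Lemma smallstepE a b : smallstep a b = (a <= b.+1)%N && (b <= a.+1)%N.
Proof. by rewrite /smallstep; apply/idP/andP; lia. Qed.

Lemma letterE k n (w : {ffun 'I_n -> 'I_k}) (i : 'I_n) : letter w i = w i.
Proof. by rewrite /letter (nth_map i) ?size_enum_ord // nth_ord_enum. Qed.

Section Snoc.
Variables (k n : nat).

Definition snoc_word (u : {ffun 'I_n -> 'I_k}) (c : 'I_k) : {ffun 'I_n.+1 -> 'I_k} :=
  [ffun j : 'I_n.+1 => if unlift ord_max j is Some j' then u j' else c].

Lemma snoc_word_max u c : snoc_word u c ord_max = c.
Proof. by rewrite ffunE unlift_none. Qed.

Lemma snoc_word_lift u c (j : 'I_n) : snoc_word u c (widen_ord (leqnSn n) j) = u j.
Proof.
have -> : widen_ord (leqnSn n) j = lift ord_max j.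
  by apply: val_inj; rewrite /= /bump leqNgt ltn_ord.
by rewrite ffunE liftK.
Qed.

Lemma snoc_word_bij :
  bijective (fun p : {ffun 'I_n -> 'I_k} * 'I_k => snoc_word p.1 p.2).
Proof.
exists (fun w : {ffun 'I_n.+1 -> 'I_k} =>
  ([ffun j => w (widen_ord (leqnSn n) j)], w ord_max)).
  move=> [u c] /=; rewrite snoc_word_max; congr pair.
  by apply/ffunP => j; rewrite ffunE snoc_word_lift.
move=> w /=; apply/ffunP => j; rewrite ffunE.
case: unliftP => [j' ->|->] //.
by rewrite ffunE; congr (w _); apply: val_inj; rewrite /= /bump leqNgt ltn_ord.
Qed.

Lemma sum_snoc_word (R : nmodType) (F : {ffun 'I_n.+1 -> 'I_k} -> R) :
  \sum_w F w = \sum_(u : {ffun 'I_n -> 'I_k}) \sum_(c : 'I_k) F (snoc_word u c).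
Proof. by rewrite pair_bigA /= (reindex _ (onW_bij _ snoc_word_bij)). Qed.

End Snoc.

Lemma letter_snoc_lt k n (u : {ffun 'I_n -> 'I_k}) c i :
  (i < n)%N -> letter (snoc_word u c) i = letter u i.
Proof.
move=> lt_in.
have -> : letter (snoc_word u c) i = snoc_word u c (widen_ord (leqnSn n) (Ordinal lt_in)).
  exact: (letterE _ (widen_ord (leqnSn n) (Ordinal lt_in))).
by rewrite snoc_word_lift (letterE u (Ordinal lt_in)).
Qed.

Lemma letter_snoc_max k n (u : {ffun 'I_n -> 'I_k}) c : letter (snoc_word u c) n = c.
Proof. by rewrite -[n]/(nat_of_ord (@ord_max n)) letterE snoc_word_max. Qed.

Lemma sstat_snoc k n (u : {ffun 'I_n.+1 -> 'I_k}) c :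
  sstat (snoc_word u c) = (sstat u + smallstep c (u ord_max))%N.
Proof.
rewrite /sstat big_ord_recr /=; congr addn.
  apply: eq_bigr => i _.
  have lt_in := ltn_ord i.
  rewrite !letter_snoc_lt ?ltnS //; exact: ltnW.
by rewrite (letter_snoc_max u c) (letter_snoc_lt _ _ (ltnSn n)) (letterE u ord_max).
Qed.

Section EndWeight.
Variables (R : nzRingType) (k : nat) (t : R).

Definition end_weight n (i : 'I_k) : R :=
  \sum_(w : {ffun 'I_n.+1 -> 'I_k} | w ord_max == i) t ^+ sstat w.

Lemma Fcoef0 : Fcoef k 0 t = 1.
Proof.
rewrite /Fcoef (eq_bigr (fun=> 1)) => [|w _]; last by rewrite /sstat big_ord0.
by rewrite sumr_const card_ffun !card_ord.
Qed.

Lemma FcoefS n : Fcoef k n.+1 t = \sum_i end_weight n i.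
Proof.
by rewrite /Fcoef (partition_big (fun w : {ffun 'I_n.+1 -> 'I_k} => w ord_max) xpredT).
Qed.

Lemma end_weight0 i : end_weight 0 i = 1.
Proof.
rewrite /end_weight big_mkcond sum_snoc_word (eq_bigr (fun=> 1)) => [|u _].
  by rewrite sumr_const card_ffun !card_ord.
rewrite -big_mkcond (big_pred1 i) => [|c]; last by rewrite snoc_word_max.
by rewrite /sstat big_ord0.
Qed.

Lemma end_weightS n i :
  end_weight n.+1 i = \sum_(j : 'I_k) t ^+ smallstep i j * end_weight n j.
Proof.
rewrite /end_weight big_mkcond sum_snoc_word.
under eq_bigr => u _.
  rewrite -big_mkcond (big_pred1 i) => [|c]; last by rewrite snoc_word_max.
  rewrite sstat_snoc; over.
rewrite (partition_big (fun u : {ffun 'I_n.+1 -> 'I_k} => u ord_max) xpredT) //=.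
apply: eq_bigr => j _; rewrite mulr_sumr; apply: eq_bigr => u /eqP <-.
by rewrite addnC exprD.
Qed.

End EndWeight.

Lemma sum_smallstep (R : nmodType) k (f : nat -> R) (i : 'I_k) :
  f 0%N = 0 -> f k.+1 = 0 ->
  \sum_(j < k | smallstep i j) f j.+1 = f i + f i.+1 + f i.+2.
Proof.
move=> f0 fk; have lt_ik := ltn_ord i.
(* After the shift the neighbourhood {i, i+1, i+2} of i+1 lies inside the range,
   and the two added terms f 0 and f k.+1 vanish. *)
have -> : \sum_(j < k | smallstep i j) f j.+1 = \sum_(0 <= j < k.+2 | smallstep i.+1 j) f j.
  rewrite big_mkcond [RHS]big_mkcond big_mkord big_ord_recl big_ord_recr /= f0 fk.
  rewrite !if_same add0r addr0; apply: eq_bigr => j _.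
  by rewrite /bump /= add1n !smallstepE.
have far j : (j < i)%N || (i.+3 <= j)%N -> ~~ smallstep i.+1 j by rewrite smallstepE; lia.
have [lt0 lt1 lt2] : [/\ (i < k.+2)%N, (i.+1 < k.+2)%N & (i.+2 < k.+2)%N] by split; lia.
rewrite big_mkcond (@big_cat_nat _ _ _ i) //=; last exact: ltnW.
rewrite (big_ltn lt0) (big_ltn lt1) (big_ltn lt2).
rewrite big_nat_cond big1 => [|j /andP[/andP[_ lt_ji] _]]; last first.
  by rewrite (negbTE (far j _)) ?lt_ji.
rewrite add0r [X in _ + (_ + (_ + X))]big_nat_cond.
rewrite big1 => [|j /andP[/andP[le_j _] _]]; last first.
  by rewrite (negbTE (far j _)) ?le_j ?orbT.
rewrite !ifT ?smallstepE; try lia.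
by rewrite addr0 !addrA.
Qed.

Section Tridiagonal.
Variables (R : comNzRingType) (y : R).

Definition tri_op (f : nat -> R) m := f m.+1 - y * (f m + f m.+1 + f m.+2).

Lemma tri_op_affine c a f g m :
  tri_op (fun n => c + a * (f n + g n)) m = c * (1 - 3 * y) + a * (tri_op f m + tri_op g m).
Proof. by rewrite /tri_op; ring. Qed.

Lemma tri_op_reflect k f m : (m < k)%N ->
  tri_op (fun n => f (k.+1 - n)%N) m = tri_op f (k - m.+1).
Proof.
move=> lt_mk; rewrite /tri_op.
have -> : (k.+1 - m.+1 = (k - m.+1).+1)%N by lia.
have -> : (k.+1 - m = (k - m.+1).+2)%N by lia.
have -> : (k.+1 - m.+2 = k - m.+1)%N by lia.
ring.
Qed.

Lemma sum_tri_op k f :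
  \sum_(m < k) tri_op f m =
  (1 - 3 * y) * \sum_(i < k) f i.+1 - y * (f 0%N + f k.+1 - f 1%N - f k).
Proof.
have shift (g : nat -> R) : \sum_(i < k) g i.+1 = \sum_(i < k) g i + g k - g 0%N.
  transitivity (\sum_(i < k.+1) g i - g 0%N); last by rewrite big_ord_recr.
  by rewrite big_ord_recl addrC addKr.
have E0 : \sum_(i < k) f i = \sum_(i < k) f i.+1 + f 0%N - f k by rewrite (shift f); ring.
rewrite /tri_op sumrB -mulr_sumr !big_split /= E0 (shift (fun i => f i.+1)) /=.
ring.
Qed.

Definition chebV (z : R) n := if n is m.+1 then chebU m z else 0.

Lemma chebV_rec z n : chebV z n.+2 = 2 * z * chebV z n.+1 - chebV z n.
Proof. by case: n => [|n] //=; rewrite subr0 mulr1. Qed.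

Lemma tri_op_chebV z m : 2 * z * y = 1 - y -> tri_op (chebV z) m = 0.
Proof.
move=> ez; rewrite /tri_op chebV_rec.
transitivity (chebV z m.+1 * (1 - y - 2 * z * y)); first by ring.
by rewrite ez subrr mulr0.
Qed.

End Tridiagonal.

Definition cheb_gamma (R : fieldType) (k : nat) (y : R) : R :=
  let phi := (1 - y) / (2 * y) in
  k%:R / (1 - 3 * y)
  - 2 * y / (1 - 3 * y) ^+ 2 * ((chebU k phi - chebU k.-1 phi - 1) / chebU k phi).

(* The constant (1 - 3y)^-1 solves the recurrence tri_op y f = 1, while chebV phi
   and its reflection n |-> chebV phi (k + 1 - n) solve tri_op y f = 0; the
   coefficient of the latter makes the values at 0 and k + 1 vanish. *)
Definition tri_sol (R : fieldType) (k : nat) (y : R) (n : nat) : R :=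
  let phi := (1 - y) / (2 * y) in
  let c := (1 - 3 * y)^-1 in
  c + (- c / chebU k phi) * (chebV phi n + chebV phi (k.+1 - n)).

Section TridiagonalSolution.
Variables (R : numFieldType) (k : nat) (y : R).
Let phi := (1 - y) / (2 * y).
Hypotheses (y_neq0 : y != 0) (den_neq0 : 1 - 3 * y != 0) (U_neq0 : chebU k phi != 0).

Lemma tri_sol0 : tri_sol k y 0 = 0.
Proof. by rewrite /tri_sol subn0 /= add0r; field; rewrite -/phi U_neq0 den_neq0. Qed.

Lemma tri_sol_boundary : tri_sol k y k.+1 = 0.
Proof. by rewrite /tri_sol subnn /= addr0; field; rewrite -/phi U_neq0 den_neq0. Qed.

Lemma tri_op_tri_sol m : (m < k)%N -> tri_op y (tri_sol k y) m = 1.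
Proof.
move=> lt_mk; rewrite /tri_sol -/phi tri_op_affine tri_op_reflect //.
have ephi : 2 * phi * y = 1 - y by rewrite /phi; field.
by rewrite !(tri_op_chebV _ ephi) addr0 mulr0 addr0 mulVf.
Qed.

Lemma sum_tri_sol : (0 < k)%N -> \sum_(i < k) tri_sol k y i.+1 = cheb_gamma k y.
Proof.
move=> k_gt0; have := sum_tri_op y k (tri_sol k y).
rewrite (eq_bigr (fun=> 1)) => [|m _]; last exact: tri_op_tri_sol.
rewrite sumr_const card_ord tri_sol0 tri_sol_boundary.
have -> : tri_sol k y k = tri_sol k y 1.
  by rewrite /tri_sol /= subSnn subSS subn0; congr (_ + _ * _); exact: addrC.
set T := \sum_(i < k) _ => E.
have -> : T = (k%:R - 2 * y * tri_sol k y 1) / (1 - 3 * y) by rewrite E; field.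
have Vk : chebV phi k = chebU k.-1 phi by case: (k) k_gt0.
rewrite /tri_sol subSS subn0 -/phi Vk /cheb_gamma -/phi /=.
by field; rewrite U_neq0 den_neq0.
Qed.

End TridiagonalSolution.

Section ChebyshevBounds.
Variable R : realFieldType.

Lemma chebU_norm_mono (z : R) n : 1 <= `|z| -> 1 <= `|chebU n z| <= `|chebU n.+1 z|.
Proof.
move=> z_ge1; elim: n => [|n /andP[IH1 IH2]].
  by rewrite /= normr1 lexx normrM normr_nat; lra.
apply/andP; split; first exact: le_trans IH2.
have := lerB_dist (2 * z * chebU n.+1 z) (chebU n z).
rewrite !normrM normr_nat /= => h.
have : `|chebU n.+1 z| <= `|z| * `|chebU n.+1 z| by rewrite ler_peMl.
lra.
Qed.

Lemma chebU_neq0 (z : R) n : 1 <= `|z| -> chebU n z != 0.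
Proof. by move=> z_ge1; rewrite -normr_gt0; case/andP: (chebU_norm_mono n z_ge1); lra. Qed.

Lemma phi_norm_ge1 (y : R) : y != 0 -> 3 * `|y| <= 1 -> 1 <= `|(1 - y) / (2 * y)|.
Proof.
move=> y_neq0 y_small; have y_gt0 : 0 < `|y| by rewrite normr_gt0.
rewrite normf_div normrM normr_nat ler_pdivlMr ?mulr_gt0 //.
have := lerB_dist 1 y; rewrite normr1; lra.
Qed.

Lemma cheb_gamma_le k (y : R) : (0 < k)%N -> y != 0 -> 12 * `|y| <= 1 ->
  `|cheb_gamma k y| <= 2 * k%:R + 1.
Proof.
move=> k_gt0 y_neq0 y_small; rewrite /cheb_gamma.
set phi := (1 - y) / (2 * y); set c := 1 - 3 * y.
have phi_ge1 : 1 <= `|phi| by apply: phi_norm_ge1 => //; lra.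
have c_ge : 3 / 4 <= `|c|.
  by have := lerB_dist 1 (3 * y); rewrite normr1 normrM normr_nat; lra.
have cV_le : `|c^-1| <= 4 / 3.
  by rewrite normfV -[_^-1]mul1r ler_pdivrMr; lra.
have /andP[U1_ge1 U1_le] : 1 <= `|chebU k.-1 phi| <= `|chebU k phi|.
  by case: (k) k_gt0 => // k' _; exact: chebU_norm_mono.
have U_gt0 : 0 < `|chebU k phi| by lra.
have r_le : `|(chebU k phi - chebU k.-1 phi - 1) / chebU k phi| <= 3.
  rewrite normf_div ler_pdivrMr //.
  have := ler_normB (chebU k phi - chebU k.-1 phi) 1.
  have := ler_normB (chebU k phi) (chebU k.-1 phi).
  rewrite normr1; lra.
set r := (_ / chebU k phi) in r_le *; clearbody r.
have -> : k%:R / c - 2 * y / c ^+ 2 * r = k%:R * c^-1 - 2 * y * (c^-1 ^+ 2 * r).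
  by rewrite exprVn !mulrA.
apply: le_trans (ler_normB _ _) _; rewrite !normrM !normr_nat.
have cV2_le : `|c^-1| * `|c^-1| <= 16 / 9.
  by apply: le_trans (ler_pM _ _ cV_le cV_le) _ => //; lra.
have y_le : `|y| <= 1 / 12 by lra.
have : `|y| * (`|c^-1| * `|c^-1| * `|r|) <= 1 / 12 * (16 / 9 * 3).
  by apply: ler_pM; rewrite ?mulr_ge0 //; exact: ler_pM.
have : k%:R * `|c^-1| <= k%:R * (4 / 3) by apply: ler_wpM2l.
have : 0 <= k%:R :> R by [].
lra.
Qed.

End ChebyshevBounds.

Lemma kernel_iter_le (R : numDomainType) k (M : 'I_k -> 'I_k -> R) (a x : R)
    (e : nat -> 'I_k -> R) :
  (forall i j, `|M i j| <= a) ->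
  (forall N i, e N.+1 i = x * \sum_j M i j * e N j) ->
  forall N i, `|e N i| <= (`|x| * k%:R * a) ^+ N * \sum_j `|e 0%N j|.
Proof.
move=> M_le e_rec; set B := \sum_j `|e 0%N j|; set q := `|x| * k%:R * a.
elim=> [|N IH] i.
  by rewrite expr0 mul1r /B (bigD1 i) //= lerDl sumr_ge0.
have -> : q ^+ N.+1 * B = `|x| * (k%:R * (a * (q ^+ N * B))) by rewrite exprS /q; ring.
rewrite e_rec normrM ler_wpM2l //.
apply: le_trans (ler_norm_sum _ _ _) _.
apply: le_trans (_ : _ <= \sum_(j < k) a * (q ^+ N * B)) _.
  by apply: ler_sum => j _; rewrite normrM ler_pM.
by rewrite sumr_const card_ord mulr_natl.
Qed.

Local Open Scope classical_set_scope.

Lemma cvg_geometric_error (R : realType) (u : nat -> R) (l C q : R) :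
  0 <= q < 1 -> (forall N, `|l - u N.+1| <= C * q ^+ N) -> u @ \oo --> l.
Proof.
move=> /andP[q_ge0 q_lt1] u_near.
have Cq0 : (fun N => C * q ^+ N) @ \oo --> 0.
  rewrite -(mulr0 C); apply: cvgM; first exact: cvg_cst.
  by apply: cvg_expr; rewrite ger0_norm.
rewrite -cvg_shiftS.
apply: (@squeeze_cvgr _ _ _ _ (fun N => l - C * q ^+ N) (fun N => l + C * q ^+ N)).
- by near=> N; rewrite -ler_distlC u_near.
- by rewrite -[X in _ --> X]subr0; apply: cvgB => //; exact: cvg_cst.
- by rewrite -[X in _ --> X]addr0; apply: cvgD => //; exact: cvg_cst.
Unshelve. all: by end_near.
Qed.

Section GeneratingFunction.
Variables (R : numFieldType) (k : nat) (t x : R).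
Let y := x * (t - 1).
Hypotheses (k_gt0 : (0 < k)%N) (y_neq0 : y != 0) (den_neq0 : 1 - 3 * y != 0)
  (U_neq0 : chebU k ((1 - y) / (2 * y)) != 0) (L_neq0 : 1 - x * cheb_gamma k y != 0).
Let L := (1 - x * cheb_gamma k y)^-1.

Definition end_gf N (i : 'I_k) := \sum_(n < N) end_weight t n i * x ^+ n.+1.

(* The i-th entry of x (I - x A)^-1 1, i.e. x h_(i+1) / (1 - x gamma). *)
Definition limit_gf (i : 'I_k) := x * L * tri_sol k y i.+1.

Lemma sum_expr_smallstep (i : 'I_k) (g : 'I_k -> R) :
  \sum_(j : 'I_k) t ^+ smallstep i j * g j
  = \sum_j g j + (t - 1) * \sum_(j : 'I_k | smallstep i j) g j.
Proof.
rewrite mulr_sumr [X in _ + X]big_mkcond -big_split; apply: eq_bigr => j _ /=.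
by case: smallstep; rewrite ?expr1 ?expr0 ?mul1r ?addr0 //; ring.
Qed.

Lemma end_gf_rec N i :
  end_gf N.+1 i = x + x * \sum_(j : 'I_k) t ^+ smallstep i j * end_gf N j.
Proof.
rewrite /end_gf big_ord_recl end_weight0 mul1r expr1; congr (x + _).
rewrite mulr_sumr; under [RHS]eq_bigr do rewrite !mulr_sumr.
rewrite [RHS]exchange_big; apply: eq_bigr => n _ /=.
rewrite end_weightS mulr_suml; apply: eq_bigr => j _.
by rewrite /bump add1n exprS; ring.
Qed.

Lemma partial_sum_end_gf N :
  \sum_(n < N.+1) Fcoef k n t * x ^+ n = 1 + \sum_i end_gf N i.
Proof.
rewrite big_ord_recl Fcoef0 mulr1; congr (1 + _).
rewrite exchange_big; apply: eq_bigr => n _ /=.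
by rewrite /bump add1n FcoefS mulr_suml.
Qed.

Lemma sum_limit_gf : 1 + \sum_i limit_gf i = L.
Proof.
rewrite -mulr_sumr (sum_tri_sol y_neq0 den_neq0 U_neq0 k_gt0).
by rewrite /L; field.
Qed.

Lemma limit_gf_rec i :
  limit_gf i = x + x * \sum_(j : 'I_k) t ^+ smallstep i j * limit_gf j.
Proof.
rewrite sum_expr_smallstep -mulr_sumr (sum_tri_sol y_neq0 den_neq0 U_neq0 k_gt0).
rewrite (@sum_smallstep _ _ (fun n => x * L * tri_sol k y n)) /=; last first.
- by rewrite (tri_sol_boundary den_neq0 U_neq0) mulr0.
- by rewrite (tri_sol0 den_neq0 U_neq0) mulr0.
have := tri_op_tri_sol y_neq0 den_neq0 (ltn_ord i); rewrite /tri_op /limit_gf => eH.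
have eL : L * (1 - x * cheb_gamma k y) = 1 by rewrite /L mulVf.
apply/eqP; rewrite -subr_eq0; apply/eqP.
transitivity (x * (L * (1 - x * cheb_gamma k y) - 1) + x * L *
  (tri_sol k y i.+1 - y * (tri_sol k y i + tri_sol k y i.+1 + tri_sol k y i.+2) - 1)).
  by rewrite /y; ring.
by rewrite eL eH !subrr !mulr0 addr0.
Qed.

Lemma gf_error_le N :
  `|L - \sum_(n < N.+1) Fcoef k n t * x ^+ n|
    <= k%:R * (\sum_j `|limit_gf j|) * (`|x| * k%:R * (1 + `|t|)) ^+ N.
Proof.
pose e N i := limit_gf i - end_gf N i.
have e_rec M i : e M.+1 i = x * \sum_(j : 'I_k) t ^+ smallstep i j * e M j.
  rewrite /e end_gf_rec {1}limit_gf_rec.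
  under [X in _ = _ * X]eq_bigr do rewrite mulrBr.
  by rewrite sumrB; ring.
have M_le (i j : 'I_k) : `|t ^+ smallstep i j| <= 1 + `|t|.
  by case: smallstep; rewrite ?normr1 ?lerDl ?lerDr.
have -> : L - \sum_(n < N.+1) Fcoef k n t * x ^+ n = \sum_i e N i.
  by rewrite -sum_limit_gf partial_sum_end_gf sumrB; ring.
apply: le_trans (ler_norm_sum _ _ _) _.
apply: le_trans
  (_ : _ <= \sum_(i < k) (`|x| * k%:R * (1 + `|t|)) ^+ N * \sum_j `|e 0%N j|) _.
  by apply: ler_sum => i _; exact: kernel_iter_le M_le e_rec N i.
rewrite sumr_const card_ord /e /end_gf.
under eq_bigr do rewrite big_ord0 subr0.
by rewrite le_eqVlt; apply/orP; left; apply/eqP; ring.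
Qed.

End GeneratingFunction.

Lemma small_x_bounds (R : realFieldType) k (t x : R) : (0 < k)%N ->
  `|x| * (12 * k%:R * (1 + `|t|) * (1 + `|t - 1|)) < 1 ->
  [/\ 12 * `|x * (t - 1)| <= 1, 1 - 3 * (x * (t - 1)) != 0,
      `|x| * k%:R * (1 + `|t|) < 1 / 12 & `|x| * (2 * k%:R + 1) < 1].
Proof.
move=> k_gt0 x_lt.
have [y_small q_small x_small] : [/\ 12 * `|x * (t - 1)| <= 1,
    `|x| * k%:R * (1 + `|t|) < 1 / 12 & `|x| * (2 * k%:R + 1) < 1].
  rewrite normrM; have K_ge1 : 1 <= k%:R :> R by rewrite ler1n.
  move: x_lt (normr_ge0 x) (normr_ge0 t) (normr_ge0 (t - 1)).
  set X := `|x|; set T := `|t|; set S := `|t - 1|; set K := k%:R => x_lt X_ge0 T_ge0 S_ge0.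
  have XK_ge : X <= X * K by rewrite ler_peMr.
  have P_ge : X * K <= X * K * (1 + T) by rewrite ler_peMr ?mulr_ge0 // lerDl.
  have P12 : 12 * (X * K * (1 + T)) * (1 + S) < 1 by lra.
  have PS_ge : 0 <= X * K * (1 + T) * S by rewrite !mulr_ge0 // addr_ge0.
  have XS_le : X * S <= X * K * (1 + T) * S by rewrite ler_wpM2r //; exact: le_trans P_ge.
  split; nra.
split=> //; rewrite -normr_gt0.
by have := lerB_dist 1 (3 * (x * (t - 1))); rewrite normr1 normrM normr_nat; lra.
Qed.

Unset Implicit Arguments.

Theorem theorem1 (R : realType) (k : nat) (hk : (2 <= k)%N) (t : R) (ht : t != 1) :
  exists2 d : R, 0 < d &
    forall x : R, 0 < `|x| < d ->
      let y := x * (t - 1) in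
      let phi := (1 - y) / (2 * y) in
      let gamma := k%:R / (1 - 3 * y)
                   - 2 * y / (1 - 3 * y) ^+ 2
                     * ((chebU k phi - chebU k.-1 phi - 1) / chebU k phi) in
      [/\ 1 - 3 * y != 0, chebU k phi != 0, 1 - x * gamma != 0 &
          ((fun N : nat => \sum_(n < N) Fcoef k n t * x ^+ n) @ \oo
            --> (1 - x * gamma)^-1)].
Proof.
have k_gt0 : (0 < k)%N by apply: ltnW.
pose D := 12 * k%:R * (1 + `|t|) * (1 + `|t - 1|).
have D_gt0 : 0 < D by rewrite !mulr_gt0 ?ltr0n // ltr_pwDl ?normr_ge0.
exists D^-1 => [|x /andP[x_gt0 x_lt] y phi gamma]; first by rewrite invr_gt0.
have [|y_small den_neq0 q_small x_small] :=
  small_x_bounds (t := t) (x := x) k_gt0 (_ : `|x| * D < 1).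
  by rewrite -ltr_pdivlMr // div1r.
have y_neq0 : y != 0 by rewrite mulf_neq0 ?subr_eq0 // -normr_gt0.
have phi_ge1 : 1 <= `|phi| by apply: phi_norm_ge1 => //; lra.
have U_neq0 : chebU k phi != 0 := chebU_neq0 k phi_ge1.
have gammaE : gamma = cheb_gamma k y by [].
have L_neq0 : 1 - x * gamma != 0.
  rewrite -normr_gt0; have := lerB_dist 1 (x * gamma); rewrite normr1 normrM gammaE.
  have := ler_wpM2l (normr_ge0 x) (cheb_gamma_le k_gt0 y_neq0 y_small); lra.
split=> //; rewrite gammaE in L_neq0 *.
apply: (cvg_geometric_error (C := k%:R * \sum_j `|limit_gf t x j|)
                            (q := `|x| * k%:R * (1 + `|t|))) => [|N].
  by rewrite !mulr_ge0 ?addr_ge0 //=; lra.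
exact: gf_error_le.
Qed.
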